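(* Let $R$ be a finite commutative ring, $K\le R^\times$, $\mathcal C=\mathrm{Cyc}(K,R)$, $\mathcal A=\mathcal A(K,R)$ its multiplication S-ring, $u=0$ and $v=1$. Then (1) for every $f\in\mathrm{Aut}(\mathcal C_{u,v})$ the set $R^\times$ is $f$-invariant, and the mapping $f\mapsto f^{R^\times}$ (restriction to $R^\times$) is a homomorphism from $\mathrm{Aut}(\mathcal C_{u,v})$ to $\mathrm{Aut}(\mathcal A)$; (2) if $R$ is a field, this mapping is an isomorphism.
   Context: All rings have an identity. A scheme on a finite set $V$ is a pair $(V,\mathcal R)$, $\mathcal R$ a partition of $V\times V$ into nonempty basis relations, closed under transposition, with the diagonal a union of basis relations and with the intersection numbers $|\{y:(x,y)\in R_1,(y,z)\in R_2\}|$ depending only on the basis relation containing $(x,z)$; relations are unions of basis relations. $\mathrm{Aut}$ of a scheme is the group of permutations fixing every basis relation; $\mathrm{Iso}$ is the group of permutations permuting basis relations. For a set $\mathcal M$ of relations, $[\mathcal C,\mathcal M]$ is the smallest scheme having all relations of $\mathcal C$ and of $\mathcal M$ as relations; $\mathcal C_{w}=[\mathcal C,\{(w,w)\}]$, $\mathcal C_{u,v}=[\mathcal C,\{(u,u)\},\{(v,v)\}]$ (so $\mathrm{Aut}(\mathcal C_{u,v})$ is the pointwise stabilizer of $u,v$ in $\mathrm{Aut}(\mathcal C)$). If $\Delta(U)$ is a relation, $\mathcal C_U$ is the scheme on $U$ with basis relations the nonempty $S\cap U^2$. For $\Gamma\le\mathrm{Iso}(\mathcal C)$, $\mathcal C^\Gamma$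 is the scheme whose relations are the $\Gamma$-invariant relations of $\mathcal C$. $\mathrm{Cyc}(K,R)$ is the scheme on $R$ with basis relations $\{(x,y): y-x\in rK\}$, $r\in R$. With $u=0$, $\mathcal C'=((\mathcal C_u)_{R^\times})^{R^\times_{right}}$ where $R^\times_{right}=\{x\mapsto xa:a\in R^\times\}$; its basis relations are of the form $\{(g,xg):g\in R^\times,x\in X\}$, $X\subseteq R^\times$. The multiplication S-ring $\mathcal A(K,R)$ is the S-ring over $R^\times$ (subring of $\mathbb Z[R^\times]$ with $\mathbb Z$-basis the sums over the sets $X$) whose basic sets are these $X$, and $\mathrm{Aut}(\mathcal A)$ is the stabilizer of the point $1$ in $\mathrm{Aut}(\mathcal C')$. *)

From HB Require Import structures.
From mathcomp Require Import all_boot all_order all_algebra all_fingroup.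
Set Implicit Arguments. Unset Strict Implicit. Unset Printing Implicit Defensive.
Import GRing.Theory.
Local Open Scope ring_scope.

Section Schemes.
Variable T : finType.

Definition diagT : {set T * T} := [set xy | xy.1 == xy.2].
Definition transp (S : {set T * T}) : {set T * T} := [set xy | (xy.2, xy.1) \in S].

Definition is_scheme (P : {set {set T * T}}) : Prop :=
  [/\ partition P [set: T * T],
      (forall S, S \in P -> transp S \in P),
      (forall S, S \in P -> S \subset diagT \/ [disjoint S & diagT]) &
      (forall S1 S2 S, S1 \in P -> S2 \in P -> S \in P ->
        forall x z x' z', (x, z) \in S -> (x', z') \in S ->
        #|[set y | ((x, y) \in S1) && ((y, z) \in S2)]|
        = #|[set y | ((x', y) \in S1) && ((y, z') \in S2)]|)].

Definition is_rel (P : {set {set T * T}}) (X : {set T * T}) : Prop :=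
  forall S, S \in P -> S \subset X \/ [disjoint S & X].

(* X is a relation of [C, M], the smallest scheme having all relations of C
   (basis P) and all relations in M as relations. *)
Definition closure_rel (P : {set {set T * T}}) (M : seq {set T * T})
    (X : {set T * T}) : Prop :=
  forall Q, is_scheme Q -> (forall Y, is_rel P Y -> is_rel Q Y) ->
    (forall Y, Y \in M -> is_rel Q Y) -> is_rel Q X.

End Schemes.

Section Cyc.
Variable R : finComUnitRingType.
Variable K : {group {unit R}}.

Definition unitsR : {set R} := [set x : R | x \is a GRing.unit].

Definition orbK (r : R) : {set R} := [set r * val k | k in K].

Definition CycB : {set {set R * R}} :=
  [set [set xy : R * R | xy.2 - xy.1 \in orbK r] | r : R].

Definition AutCyc : {set {perm R}} :=
  [set f : {perm R} | [forall S in CycB, forall x, forall y,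
     ((x, y) \in S) == ((f x, f y) \in S)]].

Definition AutCuv : {set {perm R}} :=
  [set f in AutCyc | (f 0 == 0) && (f 1 == 1)].

(* relations of C_u = [C, {(0,0)}] *)
Definition Cu_rel (X : {set R * R}) : Prop :=
  closure_rel CycB [:: [set ((0 : R), (0 : R))]] X.

Definition CuU_rel (X : {set R * R}) : Prop :=
  exists Y, Cu_rel Y /\ X = Y :&: setX unitsR unitsR.

(* relations of C' = ((C_u)_{R^x})^{R^x_right}: the right-R^x-invariant ones *)
Definition Cp_rel (X : {set R * R}) : Prop :=
  CuU_rel X /\
  (forall a x y, a \is a GRing.unit -> (x, y) \in X -> (x * a, y * a) \in X).

Definition Cp_basis (X : {set R * R}) : Prop :=
  [/\ Cp_rel X, X != set0 &
      forall Y, Cp_rel Y -> Y \subset X -> Y = set0 \/ Y = X].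

(* Aut(C'), permutations of R^x encoded as permutations of R supported on R^x *)
Definition AutCp (g : {perm R}) : Prop :=
  perm_on unitsR g /\
  forall X, Cp_basis X -> forall x y, ((x, y) \in X) = ((g x, g y) \in X).

(* Aut(A(K,R)): the stabilizer of 1 in Aut(C') *)
Definition AutA (g : {perm R}) : Prop := AutCp g /\ g 1 = 1.

End Cyc.

From Pilot Require Import Defs.
From HB Require Import structures.
From mathcomp Require Import all_boot all_order all_algebra all_fingroup.
From Stdlib Require Import Classical.
Set Implicit Arguments. Unset Strict Implicit. Unset Printing Implicit Defensive.
Import GRing.Theory FinRing.Theory.
Local Open Scope ring_scope.

(* An automorphism f of Cyc(K,R) fixing 0 preserves the basis relation containing
   (0, x), so f x \in xK; in particular f preserves R^x.  The orbitals of the group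
   Aut(C_{0,1}) form a scheme in which all relations of Cyc(K,R) and {(0,0)} are
   relations, so every relation of C_0 is a union of orbitals, hence invariant;
   restricting to R^x gives (1).  Conversely, every basis relation of a scheme
   extending C_0 lies in one class of the "type" (x, y) ~ (x', y'): x' \in xK,
   y' \in yK, y' - x' \in (y - x)K.  Hence the right-invariant sets
   {(x, y) : y/x \in sK} and {(x, y) : (y - x)/x \in tK} of pairs of units are
   relations of C', and an automorphism g of A(K,R) preserves them.  When R is a
   field this yields g y - g x \in (y - x)K, i.e. g \in Aut(C_{0,1}), and g is
   determined by its values on R^x = R \ {0}. *)

Section SchemeRelations.
Variable T : finType.
Implicit Types (Q : {set {set T * T}}) (A B S X : {set T * T}).

Definition rel_comp A B : {set T * T} :=
  [set p | [exists y, ((p.1, y) \in A) && ((y, p.2) \in B)]].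

Lemma rel_compP A B x z :
  reflect (exists y, (x, y) \in A /\ (y, z) \in B) ((x, z) \in rel_comp A B).
Proof.
rewrite inE; apply: (iffP existsP) => -[y] /=; first by case/andP; exists y.
by case=> ? ?; exists y; apply/andP.
Qed.

Lemma scheme_cover Q p : is_scheme Q -> exists2 S, S \in Q & p \in S.
Proof.
case=> /and3P[/eqP covQ _ _] _ _ _.
have /bigcupP[S SQ pS] : p \in cover Q by rewrite covQ inE.
by exists S.
Qed.

Lemma is_rel_sub Q X S p : is_rel Q X -> S \in Q -> p \in S -> p \in X -> S \subset X.
Proof. by move=> relX SQ pS pX; case: (relX S SQ) => // /disjointFr/(_ pS); rewrite pX. Qed.

Lemma is_rel_block Q X S p q : is_rel Q X -> S \in Q -> p \in S -> q \in S ->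
  (p \in X) = (q \in X).
Proof.
move=> relX SQ pS qS; apply/idP/idP => [/(is_rel_sub relX SQ pS) | /(is_rel_sub relX SQ qS)].
  by move/subsetP; apply.
by move/subsetP; apply.
Qed.

Lemma is_rel_by_blocks Q X :
  (forall S p, S \in Q -> p \in S -> p \in X -> S \subset X) -> is_rel Q X.
Proof.
move=> subX S SQ; have [SX0|[p /setIP[pS pX]]] := set_0Vmem (S :&: X).
  by right; rewrite -setI_eq0 SX0.
by left; apply: subX pS pX.
Qed.

Lemma is_rel_comp Q A B : is_scheme Q -> is_rel Q A -> is_rel Q B -> is_rel Q (rel_comp A B).
Proof.
move=> schQ relA relB; apply: is_rel_by_blocks => S [x z] SQ xzS /rel_compP[y [xyA yzB]].
have [S1 S1Q xyS1] := scheme_cover (x, y) schQ.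
have [S2 S2Q yzS2] := scheme_cover (y, z) schQ.
have /subsetP S1A := is_rel_sub relA S1Q xyS1 xyA.
have /subsetP S2B := is_rel_sub relB S2Q yzS2 yzB.
apply/subsetP=> -[x' z'] xzS'; case: schQ => _ _ _ /(_ S1 S2 S S1Q S2Q SQ _ _ _ _ xzS xzS').
move=> eqN; have : (0 < #|[set y0 | ((x', y0) \in S1) && ((y0, z') \in S2)]|)%N.
  by rewrite -eqN; apply/card_gt0P; exists y; rewrite inE xyS1.
case/card_gt0P=> y'; rewrite inE => /andP[/S1A xyA' /S2B yzB'].
by apply/rel_compP; exists y'.
Qed.

Lemma is_rel_setD Q A B : is_rel Q A -> is_rel Q B -> is_rel Q (A :\: B).
Proof.
move=> relA relB; apply: is_rel_by_blocks => S p SQ pS /setDP[pA pB].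
apply/subsetP=> q qS; rewrite inE -(is_rel_block relB SQ pS qS) pB.
by rewrite -(is_rel_block relA SQ pS qS) pA.
Qed.

Lemma closure_rel_setD P M A B :
  closure_rel P M A -> closure_rel P M B -> closure_rel P M (A :\: B).
Proof. by move=> clA clB Q schQ relP relM; apply: is_rel_setD; [apply: clA | apply: clB]. Qed.

End SchemeRelations.

Section Orbitals.
Variable T : finType.

Definition pair_act (p : T * T) (h : {perm T}) : T * T := (h p.1, h p.2).

Lemma pair_act1 : pair_act^~ 1%g =1 id.
Proof. by case=> x y; rewrite /pair_act !perm1. Qed.

Lemma pair_actM p : act_morph pair_act p.
Proof. by move=> h k; rewrite /pair_act !permM. Qed.

Canonical pair_action := TotalAction pair_act1 pair_actM.

Variable G : {group {perm T}}.

Definition orbitals : {set {set T * T}} := orbit pair_action G @: [set: T * T].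

Lemma orbitals_act S h x y : S \in orbitals -> h \in G ->
  ((h x, h y) \in S) = ((x, y) \in S).
Proof. by case/imsetP=> p _ -> hG; exact: (orbit_actr pair_action p (x, y) hG). Qed.

Lemma orbitals_scheme : is_scheme orbitals.
Proof.
split.
- by apply: orbit_partition; apply/subsetP=> h _; apply/astabsP=> p; rewrite !inE.
- move=> _ /imsetP[[a b] _ ->]; apply/imsetP; exists (b, a); rewrite ?inE //.
  by apply/setP=> -[x y]; rewrite inE; apply/orbitP/orbitP=> -[h hG [<- <-]]; exists h.
- move=> _ /imsetP[[a b] _ ->]; have [<-|neq_ab] := eqVneq a b.
    by left; apply/subsetP=> _ /orbitP[h _ <-]; rewrite inE.
  right; rewrite -setI_eq0; apply/eqP/setP=> q; rewrite !inE.
  apply/negP=> /andP[/orbitP[h _ <-]] /= /eqP/perm_inj eq_ab.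
  by rewrite eq_ab eqxx in neq_ab.
- move=> S1 S2 S S1Q S2Q /imsetP[p _ ->] x z x' z' xzS.
  rewrite -(orbit_eqP xzS) => /orbitP[h hG [<- <-]].
  rewrite -(card_imset _ (@perm_inj _ h)); apply: eq_card => y.
  rewrite [in RHS]inE; apply/imsetP/andP => [[w] | [y1 y2]].
    by rewrite inE => /andP[w1 w2] ->; rewrite !orbitals_act.
  exists ((h^-1)%g y); last by rewrite permKV.
  by rewrite inE -(orbitals_act _ _ S1Q hG) -(orbitals_act _ _ S2Q hG) permKV y1 y2.
Qed.

Lemma is_rel_orbitals_act (X : {set T * T}) h x y : is_rel orbitals X -> h \in G ->
  ((h x, h y) \in X) = ((x, y) \in X).
Proof.
move=> relX hG; have SQ : orbit pair_action G (x, y) \in orbitals by apply: imset_f.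
by rewrite (is_rel_block relX SQ (orbit_refl _ _ _) (mem_orbit _ (x, y) hG)).
Qed.

Lemma is_rel_orbitals (X : {set T * T}) :
  {in G, forall (h : {perm T}) x y, (x, y) \in X -> (h x, h y) \in X} -> is_rel orbitals X.
Proof.
move=> invX; apply: is_rel_by_blocks => _ p /imsetP[q _ ->] pS pX; rewrite -(orbit_eqP pS).
by apply/subsetP=> _ /orbitP[h hG <-]; case: p {pS} pX => x y /(invX h hG).
Qed.

End Orbitals.

Section UnitOrbits.
Variable R : finComUnitRingType.
Variable K : {group {unit R}}.
Local Notation orbK := (Defs.orbK K).

Lemma orbKE r : orbK r = orbit (FinRing.unit_action R) K r.
Proof. by []. Qed.

Lemma orbKP r a : reflect (exists2 k, k \in K & a = r * val k) (a \in orbK r).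
Proof. by apply: (iffP imsetP) => -[k kK ->]; exists k. Qed.

Lemma orbK_refl r : r \in orbK r.
Proof. by rewrite orbKE orbit_refl. Qed.

Lemma orbK_eq a r : a \in orbK r -> orbK a = orbK r.
Proof. by rewrite !orbKE => /orbit_eqP. Qed.

Lemma orbK_transl a b r : a \in orbK b -> (a \in orbK r) = (b \in orbK r).
Proof. by rewrite !orbKE; apply: orbit_transl. Qed.

Lemma orbK_unit a r : a \in orbK r -> (a \is a GRing.unit) = (r \is a GRing.unit).
Proof. by case/orbKP=> k _ ->; rewrite (unitrMl _ (valP k)). Qed.

Lemma orbK_opp a r : a \in orbK r -> - a \in orbK (- r).
Proof. by case/orbKP=> k kK ->; apply/orbKP; exists k; rewrite ?mulNr. Qed.

Lemma orbK_mul a b r s : a \in orbK r -> b \in orbK s -> a * b \in orbK (r * s).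
Proof.
case/orbKP=> k kK ->; case/orbKP=> l lK ->; apply/orbKP.
by exists (k * l)%g; rewrite ?groupM // val_unitM mulrACA.
Qed.

Lemma orbK_inv a r : r \is a GRing.unit -> a \in orbK r -> a^-1 \in orbK r^-1.
Proof.
move=> ur /orbKP[k kK ->]; apply/orbKP; exists k^-1%g; rewrite ?groupV //.
by rewrite val_unitV invrM ?(valP k) // mulrC.
Qed.

End UnitOrbits.

Section CycAutomorphisms.
Variable R : finComUnitRingType.
Variable K : {group {unit R}}.
Local Notation orbK := (Defs.orbK K).
Local Notation U := (unitsR R).

Definition cyc_rel (r : R) : {set R * R} := [set xy | xy.2 - xy.1 \in orbK r].

Definition zero_pair : {set R * R} := [set (0, 0)].

Lemma cyc_relE r x y : ((x, y) \in cyc_rel r) = (y - x \in orbK r).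
Proof. by rewrite inE. Qed.

Lemma cyc_rel_CycB r : cyc_rel r \in CycB K.
Proof. exact: imset_f. Qed.

Lemma is_rel_cyc_rel r : is_rel (CycB K) (cyc_rel r).
Proof.
apply: is_rel_by_blocks => _ [x y] /imsetP[r' _ ->]; rewrite !cyc_relE => /orbK_eq e' /orbK_eq e.
by apply/subsetP=> -[x' y']; rewrite !cyc_relE -e' e.
Qed.

Lemma AutCycP (f : {perm R}) :
  reflect (forall r x y, (f y - f x \in orbK r) = (y - x \in orbK r)) (f \in AutCyc K).
Proof.
rewrite inE; apply: (iffP forall_inP) => [fA r x y | fA _ /imsetP[r _ ->]].
  by have /forallP/(_ x)/forallP/(_ y)/eqP := fA _ (cyc_rel_CycB r); rewrite !inE.
by apply/forallP=> x; apply/forallP=> y; rewrite !inE fA.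
Qed.

Lemma AutCuvE f : (f \in AutCuv K) = [&& f \in AutCyc K, f 0 == 0 & f 1 == 1].
Proof. by rewrite inE. Qed.

Lemma AutCuv_group_set : group_set (AutCuv K).
Proof.
apply/group_setP; split=> [|f g].
  by rewrite AutCuvE !perm1 !eqxx !andbT; apply/AutCycP=> r x y; rewrite !perm1.
rewrite !AutCuvE => /and3P[/AutCycP fA /eqP f0 /eqP f1] /and3P[/AutCycP gA /eqP g0 /eqP g1].
by rewrite !permM f0 f1 g0 g1 !eqxx !andbT; apply/AutCycP=> r x y; rewrite !permM gA fA.
Qed.

Canonical AutCuv_group := group AutCuv_group_set.

Lemma AutCuvP f : f \in AutCuv K ->
  [/\ forall r x y, (f y - f x \in orbK r) = (y - x \in orbK r), f 0 = 0 & f 1 = 1].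
Proof. by rewrite AutCuvE => /and3P[/AutCycP fA /eqP f0 /eqP f1]. Qed.

Lemma AutCuv_orbK f x : f \in AutCuv K -> f x \in orbK x.
Proof. by case/AutCuvP=> fA f0 _; have := fA x 0 x; rewrite f0 !subr0 orbK_refl. Qed.

Lemma AutCuv_unit f x : f \in AutCuv K -> (f x \in U) = (x \in U).
Proof. by move=> fA; rewrite !inE (orbK_unit (AutCuv_orbK x fA)). Qed.

Lemma AutCuv_norm f : f \in AutCuv K -> f \in ('N(U | 'P))%g.
Proof. by move=> fA; apply/astabsP=> x; rewrite /= AutCuv_unit. Qed.

Lemma AutCuv_Cu_rel f X x y : f \in AutCuv K -> Cu_rel K X ->
  ((f x, f y) \in X) = ((x, y) \in X).
Proof.
move=> fA clX; apply: (is_rel_orbitals_act (G := AutCuv_group)) fA.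
apply: clX => [|Y relY|_ /[1!inE] /eqP->]; first exact: orbitals_scheme.
  apply: is_rel_orbitals => h hA x' y' xyY.
  have xyC : (x', y') \in cyc_rel (y' - x') by rewrite cyc_relE orbK_refl.
  apply: (subsetP (is_rel_sub relY (cyc_rel_CycB _) xyC xyY)).
  by case/AutCuvP: hA => hA _ _; rewrite cyc_relE hA orbK_refl.
apply: is_rel_orbitals => h /AutCuvP[_ h0 _] x' y'.
by rewrite !inE => /eqP[-> ->]; rewrite h0.
Qed.

End CycAutomorphisms.

Section CuRelations.
Variable R : finComUnitRingType.
Variable K : {group {unit R}}.
Local Notation orbK := (Defs.orbK K).

Definition same_type (p q : R * R) : Prop :=
  [/\ q.1 \in orbK p.1, q.2 \in orbK p.2 & q.2 - q.1 \in orbK (p.2 - p.1)].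

Lemma scheme_block_same_type Q S p q : is_scheme Q ->
  (forall Y, is_rel (CycB K) Y -> is_rel Q Y) -> is_rel Q (zero_pair R) ->
  S \in Q -> p \in S -> q \in S -> same_type p q.
Proof.
move=> schQ relC relZ SQ pS qS; case: p pS => x y pS.
have relT : is_rel Q [set: R * R] by move=> S' _; left; apply: subsetT.
have relCyc r : is_rel Q (cyc_rel K r) by apply/relC/is_rel_cyc_rel.
(* q.1 and q.2 are located by the relations {(a, b) : -a \in -xK} and
   {(a, b) : b \in yK}, obtained by composing with {(0, 0)}. *)
split.
- have : (x, y) \in rel_comp (cyc_rel K (- x)) (rel_comp (zero_pair R) setT).
    apply/rel_compP; exists 0; rewrite cyc_relE sub0r orbK_refl; split=> //.
    by apply/rel_compP; exists 0; rewrite !inE.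
  rewrite (is_rel_block (is_rel_comp schQ (relCyc _) (is_rel_comp schQ relZ relT)) SQ pS qS).
  case: q {qS} => x' y' /rel_compP[w [xw /rel_compP[v [/set1P[= w0 _] _]]]].
  by move: xw; rewrite w0 cyc_relE sub0r => /orbK_opp; rewrite !opprK.
- have : (x, y) \in rel_comp (rel_comp setT (zero_pair R)) (cyc_rel K y).
    apply/rel_compP; exists 0; rewrite cyc_relE subr0 orbK_refl; split=> //.
    by apply/rel_compP; exists 0; rewrite !inE.
  rewrite (is_rel_block (is_rel_comp schQ (is_rel_comp schQ relT relZ) (relCyc _)) SQ pS qS).
  by case: q {qS} => x' y' /rel_compP[w [/rel_compP[v [_ /set1P[= _ ->]]]]]; rewrite cyc_relE subr0.
- have : (x, y) \in cyc_rel K (y - x) by rewrite cyc_relE orbK_refl.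
  by rewrite (is_rel_block (relCyc _) SQ pS qS); case: q {qS} => x' y'; rewrite cyc_relE.
Qed.

Lemma Cu_rel_same_type (X : {set R * R}) :
  (forall p q, same_type p q -> p \in X -> q \in X) -> Cu_rel K X.
Proof.
move=> closX Q schQ relC relM; have relZ := relM _ (mem_head _ _).
apply: is_rel_by_blocks => S p SQ pS pX; apply/subsetP=> q qS.
exact: closX (scheme_block_same_type schQ relC relZ SQ pS qS) pX.
Qed.

End CuRelations.

Section Atoms.
Variables (T : finType) (P : {set T} -> Prop).
Hypothesis P_setD : forall A B, P A -> P B -> P (A :\: B).

Definition atom (X : {set T}) : Prop :=
  [/\ P X, X != set0 & forall Y, P Y -> Y \subset X -> Y = set0 \/ Y = X].

Lemma atom_cover X p : P X -> p \in X -> exists Z, [/\ atom Z, p \in Z & Z \subset X].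
Proof.
move: {2}#|X| (leqnn #|X|) => n; elim: n X p => [|n IHn] X p.
  by rewrite leqn0 cards_eq0 => /eqP -> _; rewrite in_set0.
move=> leXn PX pX; have [atomX|not_atomX] := classic (atom X).
  by exists X; split.
have [Y [PY sYX /set0Pn[q qY] neYX]] :
    exists Y, [/\ P Y, Y \subset X, Y != set0 & Y != X].
  apply: NNPP => noY; apply: not_atomX; split=> //; first by apply/set0Pn; exists p.
  move=> Y PY sYX; have [->|Y0] := eqVneq Y set0; first by left.
  by right; have [//|neYX] := eqVneq Y X; case: noY; exists Y.
have ltX (Z : {set T}) : Z \proper X -> (#|Z| <= n)%N.
  by move=> ltZX; rewrite -ltnS (leq_trans (proper_card ltZX)).
have [pY|pNY] := boolP (p \in Y).
  have [|Z [atomZ pZ sZY]] := IHn Y p _ PY pY; first by apply: ltX; rewrite properEneq neYX.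
  by exists Z; split=> //; apply: subset_trans sYX.
have pXY : p \in X :\: Y by rewrite inE pNY.
have leXYn : (#|X :\: Y| <= n)%N.
  apply: ltX; rewrite properEneq subsetDl andbT; apply/eqP => eqXYX.
  by have := subsetP sYX q qY; rewrite -eqXYX inE qY.
have [Z [atomZ pZ sZXY]] := IHn _ _ leXYn (P_setD PX PY) pXY.
by exists Z; split=> //; apply: subset_trans sZXY (subsetDl _ _).
Qed.

End Atoms.

Lemma restr_perm_id (T : finType) (S : {set T}) (g : {perm T}) :
  perm_on S g -> restr_perm S g = g.
Proof.
move=> onS; have gN : g \in ('N(S | 'P))%g.
  by apply/astabsP=> x; rewrite /= (perm_closed _ onS).
apply/permP=> x; have [xS|xNS] := boolP (x \in S); first by rewrite restr_permE.
by rewrite (out_perm onS xNS) (out_perm (restr_perm_on _ _) xNS).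
Qed.

Section CpAutomorphisms.
Variable R : finComUnitRingType.
Variable K : {group {unit R}}.
Local Notation U := (unitsR R).

Lemma Cp_rel_setD X1 X2 : Cp_rel K X1 -> Cp_rel K X2 -> Cp_rel K (X1 :\: X2).
Proof.
move=> [[Y1 [clY1 ->]] inv1] [[Y2 [clY2 ->]] inv2]; split.
  exists (Y1 :\: Y2); split; first exact: closure_rel_setD.
  apply/setP=> p; rewrite !(in_setD, in_setI).
  by case: (p \in Y1); case: (p \in Y2); case: (p \in setX U U).
move=> a x y ua /setDP[xy1 xyN2]; rewrite inE inv1 // andbT.
by apply: contra xyN2 => /(inv2 a^-1); rewrite unitrV !mulrK //; apply.
Qed.

Lemma AutCp_Cp_rel g X x y : AutCp K g -> Cp_rel K X ->
  ((g x, g y) \in X) = ((x, y) \in X).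
Proof.
(* [Cp_basis K] is [atom (Cp_rel K)] by definition. *)
move=> [_ gA] relX; apply/idP/idP => /(atom_cover (@Cp_rel_setD) relX)[Z [atomZ xyZ sZX]].
  by apply: (subsetP sZX); rewrite (gA Z atomZ).
by apply: (subsetP sZX); rewrite -(gA Z atomZ).
Qed.

Lemma restr_perm_AutA f : f \in AutCuv K -> AutA K (restr_perm U f).
Proof.
move=> fA; have fN := AutCuv_norm fA.
have f1 : f 1 = 1 by case/AutCuvP: fA.
split; last by rewrite restr_permE // inE unitr1.
split=> [|X [[[Y [clY ->]] _] _ _] x y]; first exact: restr_perm_on.
have [xU|xNU] := boolP (x \in U); last first.
  by rewrite (out_perm (restr_perm_on _ _) xNU) !in_setI !in_setX /= (negPf xNU) !andbF.
have [yU|yNU] := boolP (y \in U); last first.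
  by rewrite (out_perm (restr_perm_on _ _) yNU) !in_setI !in_setX /= (negPf yNU) !andbF.
rewrite !restr_permE // !in_setI !in_setX /= !(AutCuv_unit _ fA) xU yU.
by rewrite (AutCuv_Cu_rel _ _ fA clY).
Qed.

End CpAutomorphisms.

Section CpUnitPairRelations.
Variable R : finComUnitRingType.
Variable K : {group {unit R}}.
Local Notation orbK := (Defs.orbK K).

Definition unit_pair_rel (F : R -> R -> R) (s : R) : {set R * R} :=
  [set p | [&& p.1 \is a GRing.unit, p.2 \is a GRing.unit & F p.1 p.2 \in orbK s]].

Lemma Cp_rel_unit_pair_rel F s :
  (forall p q, p.1 \is a GRing.unit -> same_type K p q -> F q.1 q.2 \in orbK (F p.1 p.2)) ->
  (forall a x y, a \is a GRing.unit -> x \is a GRing.unit -> F (x * a) (y * a) = F x y) ->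
  Cp_rel K (unit_pair_rel F s).
Proof.
move=> F_type F_scale; split.
  exists (unit_pair_rel F s); split.
    apply: Cu_rel_same_type => p q pq; rewrite !inE => /and3P[u1 u2 Fp].
    case: pq => q1 q2 q21; rewrite (orbK_unit q1) (orbK_unit q2) u1 u2.
    by rewrite (orbK_transl _ (F_type _ _ u1 (And3 q1 q2 q21))).
  by apply/esym/setIidPl/subsetP=> p; rewrite !inE => /and3P[-> -> _].
move=> a x y ua; rewrite !inE /= => /and3P[ux uy Fxy].
by rewrite !(unitrMl _ ua) ux uy F_scale.
Qed.

Lemma Cp_rel_ratio s : Cp_rel K (unit_pair_rel (fun x y => y / x) s).
Proof.
apply: Cp_rel_unit_pair_rel => [[x y] [x' y'] /= ux [/= x'x y'y _]|a x y ua ux].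
  exact/orbK_mul/orbK_inv.
by rewrite invrM // mulrA mulrK.
Qed.

Lemma Cp_rel_diff_ratio t : Cp_rel K (unit_pair_rel (fun x y => (y - x) / x) t).
Proof.
apply: Cp_rel_unit_pair_rel => [[x y] [x' y'] /= ux [/= x'x _ d]|a x y ua ux].
  exact/orbK_mul/orbK_inv.
by rewrite invrM // -mulrBl mulrA mulrK.
Qed.

End CpUnitPairRelations.

Section FieldCase.
Variable R : finComUnitRingType.
Variable K : {group {unit R}}.
Local Notation orbK := (Defs.orbK K).
Local Notation U := (unitsR R).
Hypothesis unitR : forall x : R, x != 0 -> x \is a GRing.unit.

Lemma AutA_AutCuv g : AutA K g -> g \in AutCuv K.
Proof.
case=> gA g1; have [onU _] := gA.
have g0 : g 0 = 0 by apply: (out_perm onU); rewrite inE unitr0.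
have gx_orbK x : g x \in orbK x.
  have [/[1!inE] ux|xNU] := boolP (x \in U); last by rewrite (out_perm onU xNU) orbK_refl.
  have : (1, x) \in unit_pair_rel K (fun x y => y / x) x.
    by rewrite !inE unitr1 ux invr1 mulr1 orbK_refl.
  by rewrite -(AutCp_Cp_rel _ _ gA (Cp_rel_ratio _ _)) g1 !inE invr1 mulr1 => /and3P[].
have g_diff x y : g y - g x \in orbK (y - x).
  have [->|/unitR ux] := eqVneq x 0; first by rewrite g0 !subr0.
  have [->|/unitR uy] := eqVneq y 0; first by rewrite g0 !sub0r; apply: orbK_opp.
  have : (x, y) \in unit_pair_rel K (fun x y => (y - x) / x) ((y - x) / x).
    by rewrite !inE ux uy orbK_refl.
  rewrite -(AutCp_Cp_rel _ _ gA (Cp_rel_diff_ratio _ _)) !inE => /and3P[ugx _ d].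
  by have := orbK_mul d (gx_orbK x); rewrite !divrK.
rewrite AutCuvE g0 g1 !eqxx !andbT; apply/AutCycP=> r x y.
exact: orbK_transl.
Qed.

Lemma restr_perm_AutCuv_inj : {in AutCuv K &, injective (restr_perm U)}.
Proof.
move=> f g fA gA eq_fg; apply/permP=> x; have [xU|xNU] := boolP (x \in U).
  by rewrite -(restr_permE (AutCuv_norm fA) xU) eq_fg (restr_permE (AutCuv_norm gA) xU).
have -> : x = 0 by apply/eqP; apply: contraR xNU => /unitR; rewrite inE.
by case/AutCuvP: fA => _ -> _; case/AutCuvP: gA => _ -> _.
Qed.

End FieldCase.

Theorem theorem4p3 (R : finComUnitRingType) (K : {group {unit R}}) :
  (* (1) *)
  ((forall f, f \in AutCuv K -> f @: unitsR R = unitsR R) /\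
   (forall f, f \in AutCuv K -> AutA K (restr_perm (unitsR R) f)) /\
   (forall f g, f \in AutCuv K -> g \in AutCuv K ->
      restr_perm (unitsR R) (f * g)%g
      = (restr_perm (unitsR R) f * restr_perm (unitsR R) g)%g)) /\
  (* (2) *)
  ((forall x : R, x != 0 -> x \is a GRing.unit) ->
     {in AutCuv K &, injective (restr_perm (unitsR R))} /\
     (forall g, AutA K g <-> exists2 f, f \in AutCuv K & g = restr_perm (unitsR R) f)).
Proof.
split; [split; [|split] | move=> unitR; split].
- by move=> f /AutCuv_norm/astabs_setact.
- exact: restr_perm_AutA.
- by move=> f g /AutCuv_norm fN /AutCuv_norm gN; rewrite morphM.
- exact: restr_perm_AutCuv_inj.
- move=> g; split=> [gA | [f fA ->]]; last exact: restr_perm_AutA.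
  exists g; first exact: AutA_AutCuv.
  by case: gA => -[onU _] _; rewrite restr_perm_id.
Qed.
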